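(* Let $m,n\ge r\ge1$ and let $A\in\mathbb{R}^{m\times r}$, $B\in\mathbb{R}^{n\times r}$ be arbitrary. Then $$\left|\|AB^\top\|_*-\|A\|_F^2\right|\le\sqrt{\|A^\top A-B^\top B\|_*}\;\|A\|_*,$$ and in particular $$\left|\|AB^\top\|_*-\frac{\|A\|_F^2+\|B\|_F^2}{2}\right|\le\sqrt{\|A^\top A-B^\top B\|_*}\;\frac{\|A\|_*+\|B\|_*}{2}.$$
   Context: $\|\cdot\|_F$ is the Frobenius norm and $\|X\|_*=\operatorname{Tr}(\sqrt{XX^\top})$ the nuclear norm (sum of singular values). *)

From HB Require Import structures.
From mathcomp Require Import all_boot all_order all_algebra.
From mathcomp Require Import boolp classical_sets reals.
Set Implicit Arguments. Unset Strict Implicit. Unset Printing Implicit Defensive.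
Import Order.TTheory GRing.Theory Num.Theory.
Local Open Scope ring_scope.

Definition psd (R : realType) (k : nat) (M : 'M[R]_k) : Prop :=
  M^T = M /\ forall v : 'cV[R]_k, 0 <= (v^T *m M *m v) 0 0.

(* the (principal) PSD square root of a PSD matrix M: the PSD S with S*S = M.
   (Chosen by classical choice; unique when M is PSD.) *)
Definition psd_sqrt (R : realType) (k : nat) (M : 'M[R]_k) : 'M[R]_k :=
  xget 0 [set S : 'M[R]_k | psd S /\ S *m S = M].

Definition nuc (R : realType) (p q : nat) (X : 'M[R]_(p, q)) : R :=
  \tr (psd_sqrt (X *m X^T)).

Definition frob (R : realType) (p q : nat) (X : 'M[R]_(p, q)) : R :=
  Num.sqrt (\sum_(i < p) \sum_(j < q) X i j ^+ 2).

(* Let X and Y be the positive semidefinite square roots of A^T A and B^T B, so that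
   ||A||_F^2 = tr (X X), ||A||_* = tr X and ||A B^T||_* = ||Y X||_*.  Every eigenvalue l of
   N := X - Y with unit eigenvector f satisfies
     l^2 = |l| |f^T X f - f^T Y f| <= |l| (f^T X f + f^T Y f) = |f^T (X^2 - Y^2) f|
         <= ||X^2 - Y^2||_*,
   so N has operator norm at most s := sqrt ||A^T A - B^T B||_*.  Now Y X = X X - N X, and
   ||Y X||_* = tr (W^T Y X) for the contraction W of the polar decomposition of Y X; as
   |tr (K^T L P)| <= ||K|| ||L|| tr P for P positive semidefinite, both tr (Y X) <= ||Y X||_*
   lie within s tr X of tr (X X).  The second inequality is the mean of the first one and of
   its instance for (B, A). *)

From HB Require Import structures.
From mathcomp Require Import all_boot all_order all_algebra.
From mathcomp Require Import boolp classical_sets reals.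
From mathcomp Require Import sesquilinear spectral.
From mathcomp.real_closed Require Import complex.
From mathcomp Require Import ring lra.
Import Order.TTheory GRing.Theory Num.Theory.
Set Implicit Arguments. Unset Strict Implicit. Unset Printing Implicit Defensive.
Local Open Scope ring_scope.

Section EuclideanDot.
Variable R : realFieldType.
Implicit Types (k : nat).

Definition dot k (x y : 'cV[R]_k) : R := \sum_i x i 0 * y i 0.

Lemma dotE k (x y : 'cV[R]_k) : dot x y = (x^T *m y) 0 0.
Proof. by rewrite mxE; apply: eq_bigr => i _; rewrite mxE. Qed.

Lemma dotC k (x y : 'cV[R]_k) : dot x y = dot y x.
Proof. by apply: eq_bigr => i _; rewrite mulrC. Qed.

Lemma dotDl k (x y z : 'cV[R]_k) : dot (x + y) z = dot x z + dot y z.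
Proof. by rewrite /dot -big_split; apply: eq_bigr => i _; rewrite !mxE mulrDl. Qed.

Lemma dotZl k a (x z : 'cV[R]_k) : dot (a *: x) z = a * dot x z.
Proof. by rewrite /dot mulr_sumr; apply: eq_bigr => i _; rewrite !mxE mulrA. Qed.

Lemma dotNl k (x z : 'cV[R]_k) : dot (- x) z = - dot x z.
Proof. by rewrite -scaleN1r dotZl mulN1r. Qed.

Lemma dotBl k (x y z : 'cV[R]_k) : dot (x - y) z = dot x z - dot y z.
Proof. by rewrite dotDl dotNl. Qed.

Lemma dot0l k (x : 'cV[R]_k) : dot 0 x = 0.
Proof. by rewrite -(scale0r 0) dotZl mul0r. Qed.

Lemma dotDr k (x y z : 'cV[R]_k) : dot z (x + y) = dot z x + dot z y.
Proof. by rewrite dotC dotDl !(dotC z). Qed.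

Lemma dotZr k a (x z : 'cV[R]_k) : dot z (a *: x) = a * dot z x.
Proof. by rewrite dotC dotZl dotC. Qed.

Lemma dotBr k (x y z : 'cV[R]_k) : dot z (x - y) = dot z x - dot z y.
Proof. by rewrite !(dotC z) dotBl. Qed.

Lemma dot0r k (x : 'cV[R]_k) : dot x 0 = 0.
Proof. by rewrite dotC dot0l. Qed.

Lemma dot_mulmx p q (A : 'M[R]_(p, q)) x y : dot x (A *m y) = dot (A^T *m x) y.
Proof. by rewrite !dotE trmx_mul trmxK mulmxA. Qed.

Lemma dot_delta0 k (x : 'cV[R]_k.+1) : dot x (delta_mx 0 0) = x 0 0.
Proof. by rewrite dotE -colE !mxE. Qed.

Lemma dotxx k (x : 'cV[R]_k) : dot x x = \sum_i x i 0 ^+ 2.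
Proof. by apply: eq_bigr => i _; rewrite expr2. Qed.

Lemma dotxx_ge0 k (x : 'cV[R]_k) : 0 <= dot x x.
Proof. by rewrite dotxx; apply: sumr_ge0 => i _; apply: sqr_ge0. Qed.

Lemma dotxx_eq0 k (x : 'cV[R]_k) : (dot x x == 0) = (x == 0).
Proof.
apply/idP/eqP => [|->]; last by rewrite dot0l.
rewrite dotxx psumr_eq0 => [/allP x0|i _]; last exact: sqr_ge0.
apply/matrixP => i j; rewrite ord1 mxE.
by have /(_ (mem_index_enum i)) := x0 i; rewrite sqrf_eq0 => /eqP.
Qed.

Lemma dot_CauchySchwarz k (x y : 'cV[R]_k) : dot x y ^+ 2 <= dot x x * dot y y.
Proof.
have [x0|xn0] := eqVneq (dot x x) 0.
  by move/eqP: x0; rewrite dotxx_eq0 => /eqP->; rewrite !dot0l expr0n mul0r.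
have xpos : 0 < dot x x by rewrite lt0r xn0 dotxx_ge0.
have := dotxx_ge0 (dot x x *: y - dot x y *: x).
rewrite !(dotBl, dotBr, dotZl, dotZr) (dotC y x) => h.
by rewrite -subr_ge0 -(pmulr_rge0 _ xpos); nra.
Qed.

Lemma normr_dot_le k (x y : 'cV[R]_k) a b : 0 <= a -> 0 <= b ->
  dot x x <= a ^+ 2 -> dot y y <= b ^+ 2 -> `|dot x y| <= a * b.
Proof.
move=> a0 b0 xa yb; rewrite -ler_sqr ?nnegrE ?mulr_ge0 //.
rewrite -normrX ger0_norm ?sqr_ge0 //.
apply: le_trans (dot_CauchySchwarz x y) _; rewrite exprMn.
by apply: ler_pM => //; apply: dotxx_ge0.
Qed.

Lemma householder k (u : 'cV[R]_k.+1) : dot u u = 1 ->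
  exists H : 'M[R]_k.+1, [/\ H^T = H, H *m H = 1%:M & H *m delta_mx 0 0 = u].
Proof.
move=> u1; set e : 'cV[R]_k.+1 := delta_mx 0 0; set w := e - u.
(* If [u = e] then [t = 0], so [c = 0] and [H] is the identity. *)
set t := dot w w; set c := 2 / t.
exists (1%:M - c *: (w *m w^T)); split.
- by rewrite linearB /= linearZ /= trmx_mul trmxK trmx1.
- have ww : w *m w^T *m (w *m w^T) = t *: (w *m w^T).
    rewrite mulmxA -(mulmxA w) [w^T *m w]mx11_scalar mul_mx_scalar.
    by rewrite -scalemxAl -dotE.
  have cct : c * (c * t) = c + c.
    rewrite /c; have [->|tn0] := eqVneq t 0; first by rewrite !mulr0 invr0 mulr0 addr0.
    by field.
  rewrite mulmxBl !mulmxBr !mul1mx !mulmx1 -!scalemxAl -!scalemxAr ww !scalerA.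
  by rewrite -mulrA cct scalerDl opprB addrK subrK.
- have tE : t = 2 - 2 * u 0 0.
    rewrite /t /w !(dotBl, dotBr) u1 !dot_delta0 (dotC e) dot_delta0.
    by rewrite /e mxE !eqxx /=; ring.
  have we : w^T *m e = (1 - u 0 0)%:M.
    by rewrite [LHS]mx11_scalar -dotE /w dotBl !dot_delta0 /e mxE !eqxx.
  rewrite mulmxBl mul1mx -scalemxAl -mulmxA we mul_mx_scalar scalerA.
  have [t0|tn0] := eqVneq t 0.
    move/eqP: t0; rewrite dotxx_eq0 => /eqP w0.
    by rewrite w0 scaler0 subr0; apply/eqP; rewrite -subr_eq0 -/w w0.
  have -> : c * (1 - u 0 0) = 1 by rewrite /c tE; field; rewrite -tE.
  by rewrite scale1r /w opprB addrC subrK.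
Qed.

End EuclideanDot.

Definition diagf (R : pzRingType) k (f : 'I_k -> R) : 'M[R]_k := diag_mx (\row_i f i).

Section Diagonal.
Variable R : realFieldType.
Implicit Types (k : nat).

Lemma diagf_mul k (f g : 'I_k -> R) :
  diagf f *m diagf g = diagf (fun i => f i * g i).
Proof.
apply/matrixP => i j; rewrite mul_diag_mx !mxE.
by case: eqVneq => [->|]; rewrite ?mulr1n ?mulr0n ?mulr0.
Qed.

Lemma trmx_diagf k (f : 'I_k -> R) : (diagf f)^T = diagf f.
Proof. exact: tr_diag_mx. Qed.

Lemma mxtrace_diagf k (f : 'I_k -> R) : \tr (diagf f) = \sum_i f i.
Proof. by rewrite mxtrace_diag; apply: eq_bigr => i _; rewrite mxE. Qed.

Lemma diagf_delta k (f : 'I_k -> R) j :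
  diagf f *m delta_mx j 0 = f j *: (delta_mx j 0 : 'cV_k).
Proof.
apply/matrixP => a b; rewrite mul_diag_mx !mxE.
by case: eqP => [->|]; rewrite ?mulr1 ?mulr0.
Qed.

Lemma dot_diagf k (f : 'I_k -> R) y : dot y (diagf f *m y) = \sum_i f i * y i 0 ^+ 2.
Proof. by apply: eq_bigr => i _; rewrite mul_diag_mx !mxE mulrCA expr2. Qed.

Lemma dot_col p q s (A : 'M[R]_(p, q)) (K : 'M[R]_p) (B : 'M[R]_(p, s)) i j :
  dot (col i A) (K *m col j B) = (A^T *m K *m B) i j.
Proof.
by rewrite dotE !colE trmx_mul trmx_delta !mulmxA -rowE -colE -!row_mul !mxE.
Qed.

Lemma col_mulmx p q s (A : 'M[R]_(p, q)) (B : 'M[R]_(q, s)) j :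
  col j (A *m B) = A *m col j B.
Proof. by rewrite !colE mulmxA. Qed.

Lemma trmx_orth_diagf k (O : 'M[R]_k) f : (O *m diagf f *m O^T)^T = O *m diagf f *m O^T.
Proof. by rewrite !trmx_mul trmxK trmx_diagf mulmxA. Qed.

Lemma dot_orth_diagf k (O : 'M[R]_k) f v :
  dot v (O *m diagf f *m O^T *m v) = \sum_i f i * (O^T *m v) i 0 ^+ 2.
Proof. by rewrite -!mulmxA dot_mulmx dot_diagf. Qed.

Section Orthogonal.
Variables (k : nat) (O : 'M[R]_k).
Hypothesis OO : O^T *m O = 1%:M.

Lemma dot_orth_trmx v : dot (O^T *m v) (O^T *m v) = dot v v.
Proof. by rewrite -dot_mulmx mulmxA (mulmx1C OO) mul1mx. Qed.

Lemma dot_orth_col i : dot (col i O) (col i O) = 1.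
Proof. by rewrite -{2}[col i O]mul1mx dot_col mulmx1 OO mxE eqxx. Qed.

Lemma orth_diagf_mul f g :
  (O *m diagf f *m O^T) *m (O *m diagf g *m O^T) = O *m diagf (fun i => f i * g i) *m O^T.
Proof. by rewrite !mulmxA -(mulmxA _ O^T O) OO mulmx1 -(mulmxA _ (diagf f)) diagf_mul. Qed.

Lemma mxtrace_orth_diagf f : \tr (O *m diagf f *m O^T) = \sum_i f i.
Proof. by rewrite mxtrace_mulC mulmxA OO mul1mx mxtrace_diagf. Qed.

Lemma orth_diagf_col f j : O *m diagf f *m O^T *m col j O = f j *: col j O.
Proof. by rewrite colE -!mulmxA (mulmxA O^T) OO mul1mx diagf_delta -scalemxAr. Qed.

Lemma dot_orth_diagf_le f c v :
  (forall i, f i <= c) -> dot v (O *m diagf f *m O^T *m v) <= c * dot v v.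
Proof.
move=> fc; rewrite dot_orth_diagf -dot_orth_trmx dotxx mulr_sumr.
by apply: ler_sum => i _; apply: ler_wpM2r; [apply: sqr_ge0 | apply: fc].
Qed.

Lemma mxtrace_mul_orth_diagf K f :
  \tr (K *m (O *m diagf f *m O^T)) = \sum_i dot (col i O) (K *m col i O) * f i.
Proof.
rewrite !mulmxA mxtrace_mulC !mulmxA; apply: eq_bigr => i _.
by rewrite mul_mx_diag dot_col !mxE.
Qed.

End Orthogonal.
End Diagonal.

Section RealSpectral.
Variable R : rcfType.

(* Over [R[i]], [M] is Hermitian, so the complex spectral theorem yields a real
   eigenvalue. *)
Lemma sym_eigenvalue n (M : 'M[R]_n.+1) :
  M^T = M -> exists a : R, exists2 v : 'rV[R]_n.+1, v *m M = a *: v & v != 0.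
Proof.
move=> Msym; pose f := real_complex R; pose A := map_mx f M.
have Asym : A \is symmetricmx.
  by rewrite is_hermitianmxE expr0 scale1r map_mx_id // /A map_trmx Msym.
have Areal : A \is a realmx.
  by apply/mxOverP => i j; rewrite /A mxE; apply/Creal_ReP; rewrite -complexRe.
have Aherm := realsym_hermsym Asym Areal.
have /hermitian_normalmx /orthomx_spectralP Aeq := Aherm.
have dreal := hermitian_spectral_diag_real Aherm.
set P := spectralmx A in Aeq; set d := spectral_diag A in Aeq dreal.
have ev : eigenvalue A (d 0 0).
  have Pu := spectral_unit A.
  apply/eigenvalueP; exists (row 0 P).
    rewrite -row_mul Aeq !mulmxA mulmxV // mul1mx row_mul row_diag_mx.
    by rewrite -scalemxAl -rowE.
  apply/negP => /eqP r0.
  have := congr1 (fun X => X *m invmx P) r0.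
  rewrite -row_mul mulmxV // mul0mx => /rowP /(_ 0).
  by rewrite !mxE eqxx /= => /eqP; rewrite oner_eq0.
have dr : d 0 0 = f (complex.Re (d 0 0)).
  by rewrite /f complexRe; apply/esym/Creal_ReP; move/mxOverP: dreal; apply.
exists (complex.Re (d 0 0)); apply/eigenvalueP.
rewrite eigenvalue_root_char -(fmorph_root f) map_char_poly.
by move: ev; rewrite eigenvalue_root_char {1}dr.
Qed.

Lemma sym_unit_eigenvector n (M : 'M[R]_n.+1) :
  M^T = M -> exists a (u : 'cV[R]_n.+1), M *m u = a *: u /\ dot u u = 1.
Proof.
move=> Msym; have [a [v vM vn0]] := sym_eigenvalue Msym.
have xpos : 0 < dot v^T v^T by rewrite lt0r dotxx_eq0 trmx_eq0 vn0 dotxx_ge0.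
exists a, ((Num.sqrt (dot v^T v^T))^-1 *: v^T); split.
  by rewrite -scalemxAr -{1}Msym -trmx_mul vM linearZ /= !scalerA mulrC.
by rewrite dotZl dotZr mulrA -expr2 exprVn sqr_sqrtr ?mulVf ?gt_eqF // ltW.
Qed.

Lemma sym_reflect_eigenvector n (M H : 'M[R]_n.+1) (u : 'cV[R]_n.+1) a :
  M^T = M -> H^T = H -> H *m H = 1%:M -> H *m delta_mx 0 0 = u -> M *m u = a *: u ->
  H *m M *m H = block_mx (a%:M : 'M_1) 0 0 (drsubmx (H *m M *m H : 'M_(1 + n))).
Proof.
move=> Msym Hsym HH He Mu; set M' := H *m M *m H.
have M'sym : M'^T = M' by rewrite /M' !trmx_mul Hsym Msym mulmxA.
have M'e : M' *m delta_mx 0 0 = a *: (delta_mx 0 0 : 'cV_n.+1).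
  by rewrite /M' -!mulmxA He Mu -scalemxAr -He mulmxA HH mul1mx.
have M'col (i j : 'I_n.+1) : val j = 0%N -> M' i j = a * (i == 0)%:R.
  move=> j0; have -> : j = 0 by apply/val_inj.
  by have /matrixP/(_ i 0) := M'e; rewrite -colE !mxE eqxx andbT.
pose M1 : 'M_(1 + n) := M'.
have dl0 : dlsubmx M1 = 0.
  apply/matrixP => i j; rewrite ord1 [RHS]mxE mxE mxE /M1 M'col //.
  by case: eqP => [/(congr1 val)//|]; rewrite mulr0.
have ur0 : ursubmx M1 = 0 by rewrite -[M1]trmxK -trmx_dlsub /M1 M'sym dl0 trmx0.
have ul : ulsubmx M1 = a%:M.
  by apply/matrixP => i j; rewrite !ord1 [RHS]mxE mxE mxE /M1 M'col //= mulr1 mulr1n.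
change (M1 = block_mx (a%:M : 'M_1) 0 0 (drsubmx M1)).
by rewrite -{1}[M1]submxK ul ur0 dl0.
Qed.

Theorem sym_spectral k (M : 'M[R]_k) : M^T = M ->
  exists O : 'M[R]_k, exists f : 'I_k -> R, O^T *m O = 1%:M /\ M = O *m diagf f *m O^T.
Proof.
elim: k M => [|n IH] M Msym.
  by exists 1%:M, (fun=> 0); split; [rewrite trmx1 mulmx1 | apply/matrixP => -[]].
have [a [u [Mu u1]]] := sym_unit_eigenvector Msym.
have [H [Hsym HH He]] := householder u1.
have M1E := sym_reflect_eigenvector Msym Hsym HH He Mu.
set M1 := drsubmx _ in M1E.
have M1sym : M1^T = M1 by rewrite trmx_drsub !trmx_mul Hsym Msym mulmxA.
have [O1 [f1 [O1O M1O]]] := IH M1 M1sym.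
pose O2 : 'M_(1 + n) := block_mx 1%:M 0 0 O1.
have O2O : O2^T *m O2 = 1%:M.
  rewrite (tr_block_mx 1%:M) !trmx0 trmx1 (mulmx_block (1%:M : 'M_1)).
  by rewrite !(mulmx0, mul0mx, addr0, add0r, mulmx1) O1O -scalar_mx_block.
pose f : 'I_(1 + n) -> R := fun i => row_mx (a%:M : 'rV_1) (\row_j f1 j) 0 i.
have diagfE : diagf f = block_mx a%:M 0 0 (diagf f1).
  have -> : (a%:M : 'M_1) = diag_mx (a%:M : 'rV_1).
    by apply/matrixP => i j; rewrite !ord1 !mxE.
  by rewrite /diagf -diag_mx_row; congr diag_mx; apply/rowP => i; rewrite mxE.
have O2D : O2 *m block_mx (a%:M : 'M_1) 0 0 (diagf f1) *m O2^T
    = block_mx a%:M 0 0 (O1 *m diagf f1 *m O1^T).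
  rewrite /O2 (tr_block_mx 1%:M) !trmx0 trmx1 (mulmx_block (1%:M : 'M_1)).
  rewrite !(mulmx0, mul0mx, addr0, add0r, mulmx1, mul1mx) (mulmx_block (a%:M : 'M_1)).
  by rewrite !(mulmx0, mul0mx, addr0, add0r, mulmx1, mul1mx).
exists (H *m O2), f; split.
  by rewrite trmx_mul Hsym -mulmxA (mulmxA H) HH mul1mx O2O.
have -> : M = H *m (H *m M *m H) *m H by rewrite !mulmxA HH mul1mx -mulmxA HH mulmx1.
by rewrite M1E M1O -O2D -diagfE trmx_mul Hsym !mulmxA.
Qed.

End RealSpectral.

Section PositiveSemidefinite.
Variable R : realType.
Implicit Types (k : nat).

Lemma psdP k (M : 'M[R]_k) : psd M <-> M^T = M /\ forall v, 0 <= dot v (M *m v).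
Proof. by split=> -[MT Mv]; split=> // v; move: (Mv v); rewrite dotE mulmxA. Qed.

Lemma psd_orth_diagf k (O : 'M[R]_k) f :
  (forall i, 0 <= f i) -> psd (O *m diagf f *m O^T).
Proof.
move=> f0; apply/psdP; split=> [|v]; first exact: trmx_orth_diagf.
by rewrite dot_orth_diagf; apply: sumr_ge0 => i _; rewrite mulr_ge0 ?sqr_ge0.
Qed.

Lemma psd_gram p q (Y : 'M[R]_(p, q)) : psd (Y^T *m Y).
Proof.
apply/psdP; split=> [|v]; first by rewrite trmx_mul trmxK.
by rewrite -mulmxA dot_mulmx trmxK dotxx_ge0.
Qed.

Lemma psd_spectral k (M : 'M[R]_k) : psd M ->
  exists O : 'M[R]_k, exists f : 'I_k -> R,
    [/\ O^T *m O = 1%:M, forall i, 0 <= f i & M = O *m diagf f *m O^T].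
Proof.
move=> /psdP [MT Mv]; have [O [f [OO ME]]] := sym_spectral MT.
exists O, f; split=> // i.
by have := Mv (col i O); rewrite ME orth_diagf_col // dotZr dot_orth_col // mulr1.
Qed.

Lemma mxtrace_psd_ge0 k (S : 'M[R]_k) : psd S -> 0 <= \tr S.
Proof.
by move=> /psd_spectral [O [f [OO f0 ->]]]; rewrite mxtrace_orth_diagf // sumr_ge0.
Qed.

Lemma normr_mxtrace_mul_psd_le k (K L P : 'M[R]_k) a b : psd P -> 0 <= a -> 0 <= b ->
  (forall e, dot (K *m e) (K *m e) <= a ^+ 2 * dot e e) ->
  (forall e, dot (L *m e) (L *m e) <= b ^+ 2 * dot e e) ->
  `|\tr (K^T *m L *m P)| <= a * b * \tr P.
Proof.
move=> /psd_spectral [O [f [OO f0 ->]]] a0 b0 Ka Lb.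
rewrite mxtrace_mul_orth_diagf // mxtrace_orth_diagf // mulr_sumr.
apply: le_trans (ler_norm_sum _ _ _) _; apply: ler_sum => i _.
rewrite normrM (ger0_norm (f0 i)) ler_wpM2r // -mulmxA dot_mulmx trmxK.
by apply: normr_dot_le; rewrite // -[leRHS]mulr1 -(dot_orth_col OO i).
Qed.

(* Compare S and T on an orthonormal eigenbasis of T: if T f = t f, then
   g := S f - t f satisfies (S + t) g = (S S - T T) f = 0. *)
Lemma psd_sqrt_unique k (S T : 'M[R]_k) :
  psd S -> psd T -> S *m S = T *m T -> S = T.
Proof.
move=> PS PT SST; have [ST Sv] := (psdP S).1 PS.
have [O [t [OO t0 TE]]] := psd_spectral PT.
suff SO j : S *m col j O = T *m col j O.
  have SOTO : S *m O = T *m O.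
    apply/matrixP => a b; move: (congr1 (fun v : 'cV[R]_k => v a 0) (SO b)).
    by rewrite -!col_mulmx !mxE.
  by rewrite -[S]mulmx1 -[T]mulmx1 -(mulmx1C OO) !mulmxA SOTO.
set f := col j O; have Tf : T *m f = t j *: f by rewrite TE orth_diagf_col.
have SSf : S *m (S *m f) = t j ^+ 2 *: f.
  by rewrite mulmxA SST -mulmxA Tf -scalemxAr Tf scalerA -expr2.
rewrite Tf; have [tj0|tj_neq0] := eqVneq (t j) 0.
  rewrite tj0 scale0r; apply/eqP; rewrite -dotxx_eq0 dot_mulmx ST SSf tj0.
  by rewrite expr0n scale0r dot0l.
have tj_gt0 : 0 < t j by rewrite lt0r tj_neq0 t0.
set g := S *m f - t j *: f.
have Sg : S *m g + t j *: g = 0.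
  rewrite /g mulmxBr -scalemxAr SSf scalerBr scalerA -expr2.
  by rewrite addrA subrK subrr.
have /eqP : dot g g = 0.
  have := congr1 (dot g) Sg; rewrite dotDr dotZr dot0r => gSg.
  have := Sv g; have := dotxx_ge0 g => gg0 gSg0.
  apply/eqP; rewrite eq_le gg0 andbT -(pmulr_rle0 _ tj_gt0); lra.
by rewrite dotxx_eq0 subr_eq0 => /eqP.
Qed.

Lemma psd_sqrt_eq k (M S : 'M[R]_k) : psd S -> S *m S = M -> psd_sqrt M = S.
Proof.
move=> PS SM; apply: xget_unique; first by split.
by move=> T [PT TM]; apply: psd_sqrt_unique => //; rewrite TM.
Qed.

Lemma psd_sqrtP k (M : 'M[R]_k) :
  psd M -> psd (psd_sqrt M) /\ psd_sqrt M *m psd_sqrt M = M.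
Proof.
move=> /psd_spectral [O [f [OO f0 ME]]].
set S := O *m diagf (fun i => Num.sqrt (f i)) *m O^T.
have PS : psd S by apply: psd_orth_diagf => i; apply: sqrtr_ge0.
have SM : S *m S = M.
  rewrite orth_diagf_mul // ME; congr (_ *m _ *m _); congr diagf.
  by apply: funext => i; rewrite -expr2 sqr_sqrtr.
by rewrite (psd_sqrt_eq PS SM).
Qed.

Lemma trmx_mul_self_eq0 p q (K : 'M[R]_(p, q)) : K^T *m K = 0 -> K = 0.
Proof.
move=> KK; suff Kcol b : col b K = 0.
  apply/matrixP => a b; move: (congr1 (fun v : 'cV[R]_p => v a 0) (Kcol b)).
  by rewrite !mxE.
by apply/eqP; rewrite -dotxx_eq0 -{2}[col b K]mul1mx dot_col mulmx1 KK mxE.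
Qed.

End PositiveSemidefinite.

Section NuclearNorm.
Variable R : realType.
Implicit Types (k p q : nat).

Lemma polar_decomposition p q (Y : 'M[R]_(p, q)) :
  exists W : 'M[R]_(p, q),
    [/\ W *m psd_sqrt (Y^T *m Y) = Y, W^T *m Y = psd_sqrt (Y^T *m Y)
      & forall e, dot (W *m e) (W *m e) <= dot e e].
Proof.
have [PS SS] := psd_sqrtP (psd_gram Y); set S := psd_sqrt _ in PS SS *.
have [ST _] := (psdP S).1 PS; have [O [s [OO s0 SE]]] := psd_spectral PS.
(* [(s i)^-1] is [0] when [s i = 0], so [Sp] is the pseudo-inverse of [S]. *)
set Sp := O *m diagf (fun i => (s i)^-1) *m O^T.
have SpT : Sp^T = Sp by apply: trmx_orth_diagf.
have sVs i : s i * (s i)^-1 * s i = s i.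
  by have [->|si] := eqVneq (s i) 0; rewrite ?mulr0 ?mul0r // mulfV ?mul1r.
have SSpS : S *m Sp *m S = S.
  rewrite SE !orth_diagf_mul //; congr (_ *m _ *m _); congr diagf.
  by apply: funext => i; rewrite sVs.
have SpSS : Sp *m S *m S = S.
  rewrite SE !orth_diagf_mul //; congr (_ *m _ *m _); congr diagf.
  by apply: funext => i; rewrite mulrC mulrA sVs.
exists (Y *m Sp); split.
- apply/eqP; rewrite -subr_eq0; apply/eqP/trmx_mul_self_eq0.
  have -> : Y *m Sp *m S - Y = Y *m (Sp *m S - 1%:M).
    by rewrite mulmxBr mulmx1 (mulmxA Y Sp S).
  have -> : (Y *m (Sp *m S - 1%:M))^T = (S *m Sp - 1%:M) *m Y^T.
    by rewrite trmx_mul linearB /= trmx1 trmx_mul SpT ST.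
  rewrite mulmxA -(mulmxA _ Y^T) -SS mulmxBl mul1mx (mulmxA (S *m Sp)) SSpS.
  by rewrite subrr mul0mx.
- by rewrite trmx_mul SpT -mulmxA -SS mulmxA SpSS.
- move=> e; rewrite dot_mulmx dotC trmx_mul SpT.
  have -> : Sp *m Y^T *m (Y *m Sp *m e) = Sp *m S *m S *m Sp *m e.
    by rewrite -(mulmxA Sp S S) SS !mulmxA.
  rewrite SpSS -[dot e e]mul1r SE /Sp orth_diagf_mul //.
  apply: (dot_orth_diagf_le OO) => i /=.
  by have [->|si] := eqVneq (s i) 0; rewrite ?mul0r // mulfV.
Qed.

Lemma nucE_gram p q (Y : 'M[R]_(p, q)) : nuc Y = \tr (psd_sqrt (Y^T *m Y)).
Proof.
have [PS SS] := psd_sqrtP (psd_gram Y); have [W [WS WY _]] := polar_decomposition Y.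
set S := psd_sqrt _ in PS SS WS WY *; have [ST Sv] := (psdP S).1 PS.
have WWS : W^T *m W *m S = S by rewrite -mulmxA WS WY.
have PZ : psd (W *m S *m W^T).
  apply/psdP; split=> [|v]; first by rewrite !trmx_mul trmxK ST mulmxA.
  by rewrite -!mulmxA dot_mulmx Sv.
rewrite /nuc (psd_sqrt_eq PZ); first by rewrite mxtrace_mulC mulmxA WWS.
rewrite -!mulmxA (mulmxA W^T) (mulmxA (W^T *m W)) WWS !mulmxA WS -mulmxA.
by rewrite -{1}ST -trmx_mul WS.
Qed.

Lemma nucT p q (X : 'M[R]_(p, q)) : nuc X^T = nuc X.
Proof. by rewrite nucE_gram trmxK. Qed.

Lemma nucN p q (X : 'M[R]_(p, q)) : nuc (- X) = nuc X.
Proof. by rewrite /nuc linearN /= mulNmx mulmxN opprK. Qed.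

Lemma nuc_ge0 p q (X : 'M[R]_(p, q)) : 0 <= nuc X.
Proof. by rewrite nucE_gram; apply: mxtrace_psd_ge0 (psd_sqrtP (psd_gram X)).1. Qed.

Lemma nuc_orth_diagf k (O : 'M[R]_k) f :
  O^T *m O = 1%:M -> nuc (O *m diagf f *m O^T) = \sum_i `|f i|.
Proof.
move=> OO; rewrite /nuc (@psd_sqrt_eq _ _ _ (O *m diagf (fun i => `|f i|) *m O^T)).
- by rewrite mxtrace_orth_diagf.
- exact: psd_orth_diagf.
rewrite trmx_orth_diagf !orth_diagf_mul //; congr (_ *m _ *m _); congr diagf.
by apply: funext => i; rewrite -normrM ger0_norm // -expr2 sqr_ge0.
Qed.

Lemma normr_dot_le_nuc k (M : 'M[R]_k) e :
  M^T = M -> dot e e = 1 -> `|dot e (M *m e)| <= nuc M.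
Proof.
move=> /sym_spectral [O [f [OO ->]]] e1; rewrite nuc_orth_diagf // dot_orth_diagf.
apply: le_trans (ler_norm_sum _ _ _) _; apply: ler_sum => i _.
rewrite normrM (ger0_norm (sqr_ge0 _)); apply: ler_piMr => //.
rewrite -e1 -(dot_orth_trmx OO) dotxx (bigD1 i) //= lerDl.
by apply: sumr_ge0 => j _; apply: sqr_ge0.
Qed.

(* With a := f^T X f and b := f^T Y f we have l = a - b, while
   X^2 - Y^2 = (X - Y) X + Y (X - Y) gives f^T (X^2 - Y^2) f = l (a + b). *)
Lemma sqr_eigen_psd_diff_le_nuc k (X Y : 'M[R]_k) f l :
  psd X -> psd Y -> dot f f = 1 -> (X - Y) *m f = l *: f ->
  l ^+ 2 <= nuc (X *m X - Y *m Y).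
Proof.
move=> PX PY f1 Nf; have [XT Xv] := (psdP X).1 PX; have [YT Yv] := (psdP Y).1 PY.
have la : l = dot f (X *m f) - dot f (Y *m f).
  by rewrite -dotBr -mulmxBl Nf dotZr f1 mulr1.
have Df : dot f ((X *m X - Y *m Y) *m f) = l * (dot f (X *m f) + dot f (Y *m f)).
  have -> : X *m X - Y *m Y = (X - Y) *m X + Y *m (X - Y).
    by rewrite mulmxBl mulmxBr addrA subrK.
  rewrite mulmxDl dotDr -!mulmxA (dot_mulmx (X - Y)) linearB /= XT YT Nf dotZl.
  by rewrite -scalemxAr dotZr mulrDr.
have DT : (X *m X - Y *m Y)^T = X *m X - Y *m Y by rewrite linearB /= !trmx_mul XT YT.
have := normr_dot_le_nuc DT f1; rewrite Df la.
move: (Xv f) (Yv f); set a := dot f _; set b := dot f _ => a0 b0.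
rewrite ler_norml => /andP[lo hi]; have [ab|ab] := lerP b a; nra.
Qed.

Lemma dot_psd_diff_le_nuc k (X Y : 'M[R]_k) e : psd X -> psd Y ->
  dot ((X - Y) *m e) ((X - Y) *m e) <= nuc (X *m X - Y *m Y) * dot e e.
Proof.
move=> PX PY; have [XT _] := (psdP X).1 PX; have [YT _] := (psdP Y).1 PY.
have NT : (X - Y)^T = X - Y by rewrite linearB /= XT YT.
have [O [l [OO NE]]] := sym_spectral NT.
rewrite dot_mulmx NT mulmxA {1 2}NE orth_diagf_mul // dotC.
apply: (dot_orth_diagf_le OO) => j; rewrite -expr2.
apply: (sqr_eigen_psd_diff_le_nuc PX PY (dot_orth_col OO j)).
by rewrite NE orth_diagf_col.
Qed.

Lemma frob_sqr p q (A : 'M[R]_(p, q)) : frob A ^+ 2 = \tr (A^T *m A).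
Proof.
rewrite sqr_sqrtr; last by do 2!(apply: sumr_ge0 => ? _); apply: sqr_ge0.
rewrite /mxtrace exchange_big; apply: eq_bigr => j _; rewrite mxE.
by apply: eq_bigr => i _; rewrite !mxE expr2.
Qed.

Lemma nuc_mulmxT_psd_sqrt m n r (A : 'M[R]_(m, r)) (B : 'M[R]_(n, r)) :
  nuc (A *m B^T) = nuc (psd_sqrt (B^T *m B) *m psd_sqrt (A^T *m A)).
Proof.
have [PX XX] := psd_sqrtP (psd_gram A); have [PY YY] := psd_sqrtP (psd_gram B).
set X := psd_sqrt _ in PX XX *; set Y := psd_sqrt _ in PY YY *.
have [XT _] := (psdP X).1 PX; have [YT _] := (psdP Y).1 PY.
have -> : nuc (A *m B^T) = nuc (A *m Y).
  by rewrite /nuc !trmx_mul !trmxK YT !mulmxA -(mulmxA A Y Y) YY !mulmxA.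
rewrite -nucT trmx_mul YT /nuc !trmx_mul trmxK XT YT !mulmxA.
by rewrite -(mulmxA Y X X) XX !mulmxA.
Qed.

Lemma dist_nuc_psd_mul k (X Y : 'M[R]_k) s : psd X -> psd Y -> 0 <= s ->
  (forall e, dot ((X - Y) *m e) ((X - Y) *m e) <= s ^+ 2 * dot e e) ->
  `|nuc (Y *m X) - \tr (X *m X)| <= s * \tr X.
Proof.
move=> PX PY s0; set N := X - Y => Nb.
have [W [WS WY Wc]] := polar_decomposition (Y *m X).
have [PS _] := psd_sqrtP (psd_gram (Y *m X)); set S := psd_sqrt _ in WS WY PS.
have PXX : psd (X *m X) by have [XT _] := (psdP X).1 PX; rewrite -{1}XT; apply: psd_gram.
have Ib (e : 'cV[R]_k) : dot (1%:M *m e) (1%:M *m e) <= 1 ^+ 2 * dot e e.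
  by rewrite mul1mx expr1n mul1r.
have Wb (e : 'cV[R]_k) : dot (W *m e) (W *m e) <= 1 ^+ 2 * dot e e.
  by rewrite expr1n mul1r; apply: Wc.
have YXE : Y *m X = X *m X - N *m X by rewrite /N mulmxBl opprB addrC subrK.
have trS : \tr S = \tr (W^T *m (X *m X)) - \tr (W^T *m N *m X).
  by rewrite -WY YXE mulmxBr linearB /= (mulmxA W^T N X).
have trYX : \tr (W *m S) = \tr (X *m X) - \tr (N *m X) by rewrite WS YXE linearB.
have := normr_mxtrace_mul_psd_le PS ler01 ler01 Ib Wb.
have := normr_mxtrace_mul_psd_le PX ler01 s0 Ib Nb.
have := normr_mxtrace_mul_psd_le PXX ler01 ler01 Wb Ib.
have := normr_mxtrace_mul_psd_le PX ler01 s0 Wb Nb.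
rewrite trmx1 !mul1mx !mulmx1 !mul1r nucE_gram -/S trS trYX !ler_norml.
by do 4!case/andP=> ? ?; apply/andP; split; lra.
Qed.

Lemma dist_nuc_mulmxT_frob m n r (A : 'M[R]_(m, r)) (B : 'M[R]_(n, r)) :
  `| nuc (A *m B^T) - frob A ^+ 2 | <= Num.sqrt (nuc (A^T *m A - B^T *m B)) * nuc A.
Proof.
rewrite nuc_mulmxT_psd_sqrt (nucE_gram A).
have [PX XX] := psd_sqrtP (psd_gram A); have [PY YY] := psd_sqrtP (psd_gram B).
set X := psd_sqrt _ in PX XX *; set Y := psd_sqrt _ in PY YY *.
have -> : frob A ^+ 2 = \tr (X *m X) by rewrite frob_sqr XX.
apply: dist_nuc_psd_mul => // [|e]; first exact: sqrtr_ge0.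
by rewrite sqr_sqrtr ?nuc_ge0 // -XX -YY dot_psd_diff_le_nuc.
Qed.

End NuclearNorm.

Unset Implicit Arguments.

Theorem proposition3 (R : realType) (m n r : nat)
  (hr : (1 <= r)%N) (hm : (r <= m)%N) (hn : (r <= n)%N)
  (A : 'M[R]_(m, r)) (B : 'M[R]_(n, r)) :
  `| nuc (A *m B^T) - frob A ^+ 2 |
    <= Num.sqrt (nuc (A^T *m A - B^T *m B)) * nuc A
  /\
  `| nuc (A *m B^T) - (frob A ^+ 2 + frob B ^+ 2) / 2 |
    <= Num.sqrt (nuc (A^T *m A - B^T *m B)) * ((nuc A + nuc B) / 2).
Proof.
have distA := dist_nuc_mulmxT_frob A B; split=> //.
have distB := dist_nuc_mulmxT_frob B A.
rewrite -[B *m A^T]trmxK trmx_mul trmxK nucT -(opprB (A^T *m A)) nucN in distB.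
move: distA distB; set s := Num.sqrt _.
rewrite !ler_norml => /andP[lA hA] /andP[lB hB]; apply/andP; split; lra.
Qed.
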